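(* Let $\mathcal D$ be a database schema and let $\{P_1,\ldots,P_k\}\subseteq\mathcal D$ be the maximal set of relation symbols of $\mathcal D$ such that the relation for each of $P_1,\ldots,P_k$ is required to be set valued in all instances $D$ over $\mathcal D$. Given CQ queries $Q_1,Q_2$ over $\mathcal D$, let $Q_1'$ (resp. $Q_2'$) be obtained from $Q_1$ (resp. $Q_2$) by removing all duplicate subgoals whose predicates correspond to $P_1,\ldots,P_k$ (keeping one copy of each). Then $Q_1(D,B)=Q_2(D,B)$ as bags for every bag-valued instance $D$ of $\mathcal D$ in which $P_1,\ldots,P_k$ are set valued if and only if $Q_1'$ and $Q_2'$ are isomorphic.
   Context: A database instance over $\mathcal D$ assigns to each relation symbol a finite bag (multiset) of tuples; a relation is set valued if every tuple has multiplicity $1$. A CQ query is $Q(\bar X):-p_1(\bar X_1),\dots,p_n(\bar X_n)$, $n\ge1$, with relational atoms (subgoals, possibly repeated) over $\mathcal D$ and every head variable occurring in the body. Under bag semantics, each assignment $\gamma$ of the variables to constants such that every $\gamma(\bar X_i)$ is a tuple of the relation $P_i$ of $p_i$ contributes $\prod_i m_i$ copies of $\gamma(\bar X)$ to the bag $Q(D,B)$, where $m_i$ is the multiplicity of $\gamma(\bar X_i)$ in $P_i$. Two CQ queries are isomorphic if a bijective renaming of variables maps one onto the other (head onto head, body onto body as multisets of atoms). *)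

From mathcomp Require Import all_boot.
Set Implicit Arguments. Unset Strict Implicit. Unset Printing Implicit Defensive.

(* Variables and constants are both represented by natural numbers
   (an infinite supply of each). *)

Section CQ.
Variable Sym : eqType.
Variable ar : Sym -> nat.

Definition atom := (Sym * seq nat)%type.
Definition asym (a : atom) : Sym := a.1.
Definition aargs (a : atom) : seq nat := a.2.

Definition cq := (seq nat * seq atom)%type.
Definition qhead (Q : cq) : seq nat := Q.1.
Definition qbody (Q : cq) : seq atom := Q.2.

Definition body_vars (Q : cq) : seq nat := undup (flatten (map aargs (qbody Q))).

Definition wf_cq (Q : cq) : Prop :=
  [/\ qbody Q != [::],
      all (fun a => size (aargs a) == ar (asym a)) (qbody Q)
    & all (fun x => x \in body_vars Q) (qhead Q)].

(* A database instance: each relation symbol is assigned a finite bag of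
   tuples, represented as a finite sequence (multiplicity = number of
   occurrences). *)
Definition instance := Sym -> seq (seq nat).

Definition wf_instance (D : instance) : Prop :=
  forall p, all (fun t => size t == ar p) (D p).

Definition set_valued_on (P : seq Sym) (D : instance) : Prop :=
  forall p, p \in P -> uniq (D p).

Fixpoint allseqs (n : nat) (l : seq nat) : seq (seq nat) :=
  match n with
  | 0 => [:: [::]]
  | n'.+1 => [seq x :: s | x <- l, s <- allseqs n' l]
  end.

Definition adom (D : instance) (Q : cq) : seq nat :=
  undup (flatten (flatten [seq D (asym a) | a <- qbody Q])).

Definition asgn (Q : cq) (s : seq nat) (x : nat) : nat :=
  nth 0 s (index x (body_vars Q)).

Definition weight (D : instance) (Q : cq) (g : nat -> nat) : nat :=
  \prod_(a <- qbody Q) count_mem (map g (aargs a)) (D (asym a)).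

(* Multiplicity of tuple t in the bag Q(D,B): sum over all assignments of the
   query variables (assignments taking a value outside the active domain
   contribute 0, so only those into the active domain are enumerated). *)
Definition bag_mult (Q : cq) (D : instance) (t : seq nat) : nat :=
  \sum_(s <- allseqs (size (body_vars Q)) (adom D Q))
     (map (asgn Q s) (qhead Q) == t) * weight D Q (asgn Q s).

Fixpoint dedup_on (P : seq Sym) (b : seq atom) : seq atom :=
  match b with
  | [::] => [::]
  | a :: b' => if (asym a \in P) && (a \in b') then dedup_on P b'
               else a :: dedup_on P b'
  end.

Definition dedup_cq (P : seq Sym) (Q : cq) : cq := (qhead Q, dedup_on P (qbody Q)).

Definition rename (f : nat -> nat) (a : atom) : atom := (asym a, map f (aargs a)).

Definition cq_iso (Q1 Q2 : cq) : Prop :=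
  exists f : nat -> nat, [/\ bijective f,
    map f (qhead Q1) = qhead Q2
  & perm_eq (map (rename f) (qbody Q1)) (qbody Q2)].

End CQ.

From mathcomp Require Import all_boot.
From Stdlib Require Import FunctionalExtensionality.
Set Implicit Arguments. Unset Strict Implicit. Unset Printing Implicit Defensive.

(* Repeating a subgoal over a set-valued relation multiplies each contribution
   by a factor 0 or 1, so it changes nothing, and an isomorphism only renames
   the summation variables; this gives one direction.

   Conversely, let Q and R be deduplicated and equivalent.  For a vector vs of
   positive integers, build an instance of R in which every variable x has
   vs_x copies and every atom b over a bag-valued symbol is repeated vs_b
   times.  The multiplicity of the head of R in Q(D) is then a sum, over the
   head-preserving homomorphisms h : Q -> R, of the monomials
   prod_y vs_(h y) * prod_a vs_(h a), with y ranging over the non-head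
   variables and a over the bag atoms of Q.  Polynomials with natural
   coefficients agreeing on all positive points have the same monomials, so
   some h has the monomial of the identity of R: it maps the non-head
   variables bijectively, and the bag atoms as multisets, onto those of R.
   With a similar homomorphism R -> Q, counting head variables and the
   (distinct) set atoms shows that h extends to an isomorphism. *)

Lemma uniq_count_le1 (T : eqType) (s : seq T) :
  (forall x, count_mem x s <= 1) -> uniq s.
Proof.
move=> le1; apply: count_mem_uniq => x.
have [xs|/count_memPn -> //] := boolP (x \in s).
by apply/eqP; rewrite eqn_leq le1 -has_count has_pred1.
Qed.

Lemma prodn_bool (T : Type) (b : pred T) (s : seq T) : \prod_(x <- s) (b x : nat) = all b s.
Proof. by elim: s => [|x s IHs]; rewrite ?big_nil ?big_cons ?IHs //= mulnb. Qed.

Lemma count_flatten_nseq (T : eqType) (s : seq T) (m : T -> nat) x : uniq s ->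
  count_mem x (flatten [seq nseq (m y) y | y <- s]) = (x \in s) * m x.
Proof.
elim: s => [|y s IHs] //= /andP [ys us].
rewrite count_cat IHs // count_nseq inE /= eq_sym.
by case: eqP => [->|_]; rewrite ?(negbTE ys) //= addn0.
Qed.

Lemma mem_allseqs n A s :
  (s \in allseqs n A) = (size s == n) && all (mem A) s.
Proof.
elim: n s => [|n IHn] s /=; first by rewrite inE; case: s.
apply/allpairsPdep/idP => [[x [s' [xA s'A ->]]]|].
  by rewrite /= eqSS xA -IHn.
case: s => [|x s] //= /andP[sn /andP[xA sA]].
by exists x, s; rewrite IHn -eqSS sn sA.
Qed.

Lemma uniq_allseqs n A : uniq A -> uniq (allseqs n A).
Proof.
by move=> uA; elim: n => [|n IHn] //=; apply: allpairs_uniq => // -[x s] [y t] _ _ [-> ->].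
Qed.

Lemma perm_eq_count_on (T : eqType) (S s t : seq T) :
  {subset s <= S} -> {subset t <= S} ->
  {in S, forall x, count_mem x s = count_mem x t} -> perm_eq s t.
Proof.
move=> sS tS eq_st; apply/allP => x; rewrite mem_cat => /orP[/sS|/tS] /eq_st /= ->//.
Qed.

Lemma prod_count_mem (T U : eqType) (f : U -> nat) (g : T -> U) (s : seq T) (S : seq U) :
  uniq S -> {subset map g s <= S} ->
  \prod_(y <- s) f (g y) = \prod_(x <- S) f x ^ count_mem x (map g s).
Proof.
move=> uS; elim: s => [|y s IHs] gsS.
  by rewrite big_nil big1 // => x _; rewrite expn0.
rewrite big_cons IHs => [|x xs]; last by apply: gsS; rewrite inE xs orbT.
under [RHS]eq_bigr => x _ do rewrite /= expnD.
rewrite big_split /=; congr (_ * _).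
rewrite (bigD1_seq (g y)) ?gsS ?mem_head //= eqxx expn1.
by rewrite big1 ?muln1 // => x /negbTE; rewrite eq_sym => ->.
Qed.

Lemma map_index_iota (T : eqType) (s : seq T) : uniq s -> map (index^~ s) s = iota 0 (size s).
Proof.
move=> us; apply: (@eq_from_nth _ 0) => [|i]; rewrite size_map ?size_iota // => lt_is.
by case: s us lt_is => // x s' us lt_is; rewrite (nth_map x) // nth_iota // index_uniq.
Qed.

Definition transp (a b z : nat) : nat := if z == a then b else if z == b then a else z.

Lemma transpK a b : involutive (transp a b).
Proof.
move=> z; rewrite /transp; case: (eqVneq z a) => [->|neq_za].
  by rewrite eqxx; case: eqP.
by case: (eqVneq z b) => [->|neq_zb]; rewrite ?eqxx // (negbTE neq_za) (negbTE neq_zb).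
Qed.

Lemma exists_bij_map (xs ys : seq nat) : uniq xs -> uniq ys -> size xs = size ys ->
  exists2 f, bijective f & map f xs = ys.
Proof.
elim: xs ys => [|x xs IHxs] [|y ys] //=; first by exists id => //; exists id.
move=> /andP[xxs uxs] /andP[yys uys] [size_eq].
have [f bij_f f_xs] := IHxs ys uxs uys size_eq.
exists (transp y (f x) \o f).
  by apply: bij_comp => //; exists (transp y (f x)); apply: transpK.
rewrite /= /transp eqxx -f_xs; congr cons; first by case: eqP.
apply/eq_in_map => z zxs /=.
have /negbTE -> : f z != y by apply: contraNneq yys => <-; rewrite -f_xs map_f.
have /negbTE -> // : f z != f x by apply: contraNneq xxs => /(bij_inj bij_f) <-.
Qed.

Lemma size_undup_map (T U : eqType) (f : T -> U) (s : seq T) :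
  size (undup (map f s)) <= size (undup s).
Proof.
rewrite -(size_map f); apply: uniq_leq_size => [|_ /[!mem_undup] /mapP[y ys ->]].
  exact: undup_uniq.
by rewrite map_f ?mem_undup.
Qed.

Lemma mem_map_undup (T U : eqType) (f : T -> U) (s : seq T) : map f (undup s) =i map f s.
Proof.
by move=> x; apply/mapP/mapP => -[y ys ->]; exists y; rewrite ?mem_undup in ys *.
Qed.

(** * Sums over assignments *)

Definition upd (g : nat -> nat) (v x : nat) : nat -> nat :=
  fun y => if y == v then x else g y.

Definition asgn_of (V s : seq nat) (y : nat) : nat := nth 0 s (index y V).

Lemma asgn_of_id V y : y \in V -> asgn_of V V y = y.
Proof. by move=> yV; rewrite /asgn_of nth_index. Qed.

(* [sum_asgn A V G] is the sum of [G g] over all [g : V -> A], where [g] is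
   extended by [0] outside [V]. *)
Fixpoint sum_asgn (A V : seq nat) (G : (nat -> nat) -> nat) : nat :=
  if V is v :: V' then \sum_(x <- A) sum_asgn A V' (fun g => G (upd g v x))
  else G (fun _ => 0).

Section SumAsgn.

Implicit Types (A B V W : seq nat) (G : (nat -> nat) -> nat).

Lemma sum_allseqs_asgn A V G :
  \sum_(s <- allseqs (size V) A) G (asgn_of V s) = sum_asgn A V G.
Proof.
elim: V G => [|v V IHV] G /=; first by rewrite big_seq1.
rewrite big_allpairs_dep; apply: eq_bigr => x _; rewrite -IHV.
apply: eq_bigr => s _; congr G; apply: functional_extensionality => y.
by rewrite /asgn_of /upd /= eq_sym; case: (y == v).
Qed.

Lemma eq_in_sum_asgn A V G G' :
  (forall g, all (fun y => g y \in A) V -> G g = G' g) ->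
  sum_asgn A V G = sum_asgn A V G'.
Proof.
elim: V G G' => [|v V IHV] G G' eqG /=; first exact: eqG.
apply: eq_big_seq => x xA; apply: IHV => g gA; apply: eqG.
rewrite /= /upd eqxx xA; apply/allP => y yV.
by case: eqP => // _; apply: (allP gA).
Qed.

Lemma sum_asgn_sum (I : Type) (r : seq I) A V (F : I -> (nat -> nat) -> nat) :
  sum_asgn A V (fun g => \sum_(i <- r) F i g) = \sum_(i <- r) sum_asgn A V (F i).
Proof.
elim: V F => [|v V IHV] F //=.
under eq_bigr => x _ do rewrite IHV.
exact: exchange_big.
Qed.

Lemma sum_asgn_distrr c A V G :
  sum_asgn A V (fun g => c * G g) = c * sum_asgn A V G.
Proof.
elim: V G => [|v V IHV] G //=.
under eq_bigr => x _ do rewrite IHV.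
by rewrite big_distrr.
Qed.

Lemma sum_asgn_eq0 A V G :
  (forall g, all (fun y => g y \in A) V -> G g = 0) -> sum_asgn A V G = 0.
Proof.
by move=> G0; rewrite (@eq_in_sum_asgn _ _ _ (fun g => 0 * G g)) ?sum_asgn_distrr.
Qed.

Lemma updC g u v x y : u != v -> upd (upd g v y) u x = upd (upd g u x) v y.
Proof.
move=> neq_uv; apply: functional_extensionality => z; rewrite /upd.
by case: (eqVneq z u) => [->|//]; rewrite (negbTE neq_uv).
Qed.

Lemma sum_asgn_cat_cons A W1 v W2 G : v \notin W1 ->
  sum_asgn A (W1 ++ v :: W2) G = sum_asgn A (v :: W1 ++ W2) G.
Proof.
elim: W1 G => [|u W1 IHW] G //=.
rewrite inE negb_or => /andP [neq_vu vW1].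
under eq_bigr => x _ do rewrite IHW //=.
rewrite exchange_big; apply: eq_bigr => y _; apply: eq_bigr => x _.
by congr sum_asgn; apply: functional_extensionality => g; rewrite updC // eq_sym.
Qed.

Lemma perm_sum_asgn A V W G : uniq V -> perm_eq V W ->
  sum_asgn A V G = sum_asgn A W G.
Proof.
elim: V W G => [|v V IHV] W G; first by rewrite perm_sym => _ /perm_nilP ->.
move=> /= /andP [vV uV] pVW.
have vW : v \in W by rewrite -(perm_mem pVW) mem_head.
case/splitPr: vW pVW => W1 W2 pVW.
have vW1 : v \notin W1.
  by move: (perm_uniq pVW); rewrite /= vV uV cat_uniq /= => /esym/and4P[_ /norP[]].
rewrite sum_asgn_cat_cons //=; apply: eq_bigr => x _; apply: IHV => //.
by rewrite -(perm_cons v) (perm_trans pVW) // -cat1s perm_catCA.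
Qed.

Lemma sum_asgn_map A V G (f f' : nat -> nat) : cancel f f' -> cancel f' f ->
  sum_asgn A (map f V) G = sum_asgn A V (fun g => G (g \o f')).
Proof.
move=> fK f'K; elim: V G => [|v V IHV] G //=.
apply: eq_bigr => x _; rewrite IHV; congr sum_asgn.
apply: functional_extensionality => g; congr G.
apply: functional_extensionality => z; rewrite /upd /=.
by rewrite -{1}(f'K z) (can_eq fK).
Qed.

Lemma eq_dom_sum_asgn A B V G : uniq A -> uniq B -> A =i B ->
  sum_asgn A V G = sum_asgn B V G.
Proof.
move=> uA uB eqAB; elim: V G => [|v V IHV] G //=.
by rewrite (perm_big _ (uniq_perm uA uB eqAB)); apply: eq_bigr => x _.
Qed.

Lemma big_sub_dom (F : nat -> nat) A B : uniq A -> uniq B -> {subset A <= B} ->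
  (forall x, x \notin A -> F x = 0) -> \sum_(x <- B) F x = \sum_(x <- A) F x.
Proof.
move=> uA uB sAB F0.
rewrite (bigID (mem A)) /= [X in _ + X]big1 ?addn0; last by move=> x /F0.
rewrite -big_filter; apply/perm_big/uniq_perm; rewrite ?filter_uniq // => x.
by rewrite mem_filter andb_idr //; apply: sAB.
Qed.

Lemma sum_asgn_sub_dom A B V G : uniq A -> uniq B -> {subset A <= B} -> uniq V ->
  (forall g, ~~ all (fun y => g y \in A) V -> G g = 0) ->
  sum_asgn B V G = sum_asgn A V G.
Proof.
move=> uA uB sAB; elim: V G => [|v V IHV] G //= /andP [vV uV] G0.
have -> : \sum_(x <- B) sum_asgn B V (fun g => G (upd g v x)) =
          \sum_(x <- B) sum_asgn A V (fun g => G (upd g v x)).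
  apply: eq_bigr => x _; apply: IHV => // g gA; apply: G0.
  rewrite /= negb_and; apply/orP; right; apply: contra gA => /allP gA.
  apply/allP => y yV; have := gA y yV.
  by rewrite /upd; case: eqP => // eq_yv; rewrite -eq_yv yV in vV.
apply: big_sub_dom => // x xA; apply: sum_asgn_eq0 => g _; apply: G0.
by rewrite /= /upd eqxx (negbTE xA).
Qed.

Lemma sum_asgn_prod A V (f : nat -> nat -> nat) : uniq V ->
  sum_asgn A V (fun g => \prod_(y <- V) f y (g y)) = \prod_(y <- V) \sum_(x <- A) f y x.
Proof.
elim: V => [|v V IHV] /=; first by rewrite !big_nil.
move=> /andP [vV uV]; rewrite big_cons big_distrl /=; apply: eq_bigr => x _.
rewrite -(IHV uV) -sum_asgn_distrr; congr sum_asgn.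
apply: functional_extensionality => g; rewrite big_cons /upd eqxx.
by congr (_ * _); apply: eq_big_seq => y yV; case: eqP => // eq_yv; rewrite -eq_yv yV in vV.
Qed.

Lemma sum_iota_muln M N (F : nat -> nat) :
  \sum_(c <- iota 0 (M * N)) F c =
  \sum_(x <- iota 0 M) \sum_(j <- iota 0 N) F (x + M * j).
Proof.
elim: N => [|N IHN]; first by rewrite muln0 big_nil big1 // => x _; rewrite big_nil.
have -> : iota 0 N.+1 = iota 0 N ++ [:: N] by rewrite -addn1 iotaD.
rewrite mulnS addnC iotaD big_cat IHN add0n -{1}(addn0 (M * N)) iotaDl big_map.
under [RHS]eq_bigr => x _ do rewrite big_cat big_seq1.
by rewrite big_split /=; congr (_ + _); apply: eq_bigr => x _; rewrite addnC.
Qed.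

(* Values below [M * N] are the pairs [(x, j)] with [x < M], [j < N], read as [x + M * j]. *)
Lemma sum_asgn_iota_muln M N V G :
  sum_asgn (iota 0 (M * N)) V G =
  sum_asgn (iota 0 M) V (fun h =>
    sum_asgn (iota 0 N) V (fun i => G (fun y => h y + M * i y))).
Proof.
elim: V G => [|v V IHV] G /=.
  by congr G; apply: functional_extensionality => y; rewrite muln0.
rewrite sum_iota_muln; apply: eq_bigr => x _.
rewrite sum_asgn_sum; apply: eq_bigr => j _; rewrite IHV.
congr sum_asgn; apply: functional_extensionality => h.
congr sum_asgn; apply: functional_extensionality => i.
by congr G; apply: functional_extensionality => y; rewrite /upd; case: eqP.
Qed.

End SumAsgn.

(** * Sums of monomials determine their exponents *)

Fixpoint monomial (xs e : seq nat) : nat :=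
  match xs, e with
  | x :: xs', j :: e' => x ^ j * monomial xs' e'
  | _, _ => 1
  end.

Lemma monomial_cat xs1 xs2 e1 e2 : size xs1 = size e1 ->
  monomial (xs1 ++ xs2) (e1 ++ e2) = monomial xs1 e1 * monomial xs2 e2.
Proof.
elim: xs1 e1 => [|x xs1 IHxs] [|j e1] //=; first by rewrite mul1n.
by move=> [size_eq]; rewrite IHxs // mulnA.
Qed.

Lemma monomial_map (T : Type) (f g : T -> nat) (s : seq T) :
  monomial (map f s) (map g s) = \prod_(x <- s) f x ^ g x.
Proof. by elim: s => [|x s IHs]; rewrite ?big_nil ?big_cons //= IHs. Qed.

Lemma eq_digits x c d m n : c < x -> d < x -> c + x * m = d + x * n ->
  c = d /\ m = n.
Proof.
move=> cx dx eq_cd; have eq_c : c = d.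
  have := congr1 (modn^~ x) eq_cd.
  by rewrite ![_ + x * _]addnC ![x * _]mulnC !modnMDl !modn_small.
split=> //; move: eq_cd; rewrite eq_c => /addnI /eqP.
by rewrite eqn_pmul2l ?(leq_ltn_trans _ dx) // => /eqP.
Qed.

(* Coefficients bounded by [B] are the digits of the value in base [x > B]. *)
Lemma eq_coef_nat_poly J B (c d : nat -> nat) :
  (forall j, c j <= B) -> (forall j, d j <= B) ->
  (forall x, B < x -> \sum_(j < J) c j * x ^ j = \sum_(j < J) d j * x ^ j) ->
  forall j, j < J -> c j = d j.
Proof.
elim: J c d => [|J IHJ] c d cB dB eq_cd j //.
have step x : B < x ->
    c 0 = d 0 /\ \sum_(i < J) c i.+1 * x ^ i = \sum_(i < J) d i.+1 * x ^ i.
  move=> ltBx; have := eq_cd x ltBx; rewrite !big_ord_recl /= !expn0 !muln1.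
  under eq_bigr => i _ do rewrite /bump /= add1n expnS mulnCA.
  under [in RHS]eq_bigr => i _ do rewrite /bump /= add1n expnS mulnCA.
  by rewrite -!big_distrr; apply: eq_digits; apply: leq_ltn_trans ltBx.
case: j => [|j] ltjJ; first by case: (step _ (ltnSn B)).
by apply: (IHJ (c \o succn) (d \o succn)) => [i|i|x /step[]|] //; [exact: cB|exact: dB].
Qed.

Definition slice (L : seq (seq nat)) (j : nat) : seq (seq nat) :=
  [seq behead e | e <- L & head 0 e == j].

Lemma count_slice L j e : all (fun e => 0 < size e) L ->
  count_mem (j :: e) L = count_mem e (slice L j).
Proof.
elim: L => [|[|j' e'] L IHL] //= posL.
rewrite IHL // /slice /= -[j' :: e' == j :: e]/((j' == j) && (e' == e)).
by case: eqP.
Qed.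

Lemma sum_monomial_cons J x xs L :
  all (fun e => 0 < size e) L -> all (fun e => head 0 e < J) L ->
  \sum_(e <- L) monomial (x :: xs) e =
  \sum_(j < J) (\sum_(e <- slice L j) monomial xs e) * x ^ j.
Proof.
move=> /allP posL /allP ltJ.
have -> : \sum_(e <- L) monomial (x :: xs) e =
    \sum_(e <- L) \sum_(j < J) (head 0 e == j) * (x ^ j * monomial xs (behead e)).
  apply: eq_big_seq => e eL; rewrite (bigD1 (Ordinal (ltJ e eL))) //= eqxx mul1n.
  rewrite big1 ?addn0 => [|j /negbTE]; last by rewrite -val_eqE eq_sym /= => ->.
  by case: e eL (posL e eL).
rewrite exchange_big; apply: eq_bigr => j _.
rewrite /slice big_map big_filter big_distrl [RHS]big_mkcond; apply: eq_bigr => e _.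
by case: eqP; rewrite ?mul1n ?mul0n // mulnC.
Qed.

Lemma count_sizes0 (L : seq (seq nat)) e : all (fun e => size e == 0) L ->
  count_mem e L = (e == [::]) * size L.
Proof.
rewrite (eq_all (a2 := pred1 [::])) => [/all_pred1P ->|e']; last exact: size_eq0.
by rewrite count_nseq size_nseq eq_sym.
Qed.

Lemma sum_monomial_nil (L : seq (seq nat)) : \sum_(e <- L) monomial [::] e = size L.
Proof. by elim: L => [|e L IHL]; rewrite ?big_nil ?big_cons ?IHL. Qed.

Definition eq_monomial_sums k (L1 L2 : seq (seq nat)) :=
  forall xs, size xs = k -> all (fun x => 0 < x) xs ->
    \sum_(e <- L1) monomial xs e = \sum_(e <- L2) monomial xs e.

Lemma size_gt0_sizeS k (L : seq (seq nat)) :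
  all (fun e => size e == k.+1) L -> all (fun e => 0 < size e) L.
Proof. by move=> /allP sL; apply/allP => e /sL /eqP ->. Qed.

Lemma size_slice k (L : seq (seq nat)) j :
  all (fun e => size e == k.+1) L -> all (fun e => size e == k) (slice L j).
Proof.
move=> /allP sL; apply/allP => e' /mapP[e]; rewrite mem_filter => /andP[_ /sL /eqP se] ->.
by rewrite size_behead se.
Qed.

Lemma count_nil_sizeS k (L : seq (seq nat)) :
  all (fun e => size e == k.+1) L -> count_mem [::] L = 0.
Proof. by move=> /allP sL; apply/count_memPn/negP => /sL. Qed.

(* In the first variable [x], the coefficient of [x ^ j] is the sum over [slice _ j]. *)
Lemma eq_monomial_sums_slice k L1 L2 j :
  all (fun e => size e == k.+1) L1 -> all (fun e => size e == k.+1) L2 ->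
  eq_monomial_sums k.+1 L1 L2 -> eq_monomial_sums k (slice L1 j) (slice L2 j).
Proof.
move=> size_L1 size_L2 eqL xs size_xs pos_xs.
pose J := (maxn j (\max_(e <- L1 ++ L2) head 0 e)).+1.
have ltJ L : {subset L <= L1 ++ L2} -> all (fun e => head 0 e < J) L.
  move=> sL; apply/allP => e /sL eL.
  by rewrite ltnS leq_max; apply/orP; right; apply: (@leq_bigmax_seq _ _ predT (head 0) e eL).
pose S L i := \sum_(e <- slice L i) monomial xs e.
have leS L i : S L i <= \sum_(e <- L) monomial xs (behead e).
  rewrite /S /slice big_map big_filter.
  by rewrite [X in _ <= X](bigID (fun e => head 0 e == i)) leq_addr.
pose B := \sum_(e <- L1 ++ L2) monomial xs (behead e).
apply: (@eq_coef_nat_poly J B (S L1) (S L2)) => [i|i|x ltBx|]; last by rewrite ltnS leq_maxl.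
- by apply: leq_trans (leS L1 i) _; rewrite /B big_cat leq_addr.
- by apply: leq_trans (leS L2 i) _; rewrite /B big_cat leq_addl.
have sub_L1 : {subset L1 <= L1 ++ L2} by move=> e eL; rewrite mem_cat eL.
have sub_L2 : {subset L2 <= L1 ++ L2} by move=> e eL; rewrite mem_cat eL orbT.
rewrite -!sum_monomial_cons ?(size_gt0_sizeS size_L1) ?(size_gt0_sizeS size_L2) ?ltJ //.
apply: eqL; first by rewrite /= size_xs.
by rewrite /= pos_xs (leq_ltn_trans (leq0n B) ltBx).
Qed.

Lemma count_eq_of_monomial_sums k (L1 L2 : seq (seq nat)) :
  all (fun e => size e == k) L1 -> all (fun e => size e == k) L2 ->
  eq_monomial_sums k L1 L2 -> forall e, count_mem e L1 = count_mem e L2.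
Proof.
elim: k L1 L2 => [|k IHk] L1 L2 size_L1 size_L2 eqL.
  by move=> e; rewrite !count_sizes0 // -!sum_monomial_nil (eqL [::]).
case=> [|j e]; first by rewrite !(count_nil_sizeS (k:=k)).
rewrite !count_slice ?(size_gt0_sizeS (k:=k)) //.
by apply: IHk; rewrite ?size_slice //; apply: eq_monomial_sums_slice.
Qed.

Section Queries.

Variable Sym : eqType.
Implicit Types (Q R : cq Sym) (D : instance Sym) (P : seq Sym).

Definition cq_hom (Q R : cq Sym) (h : nat -> nat) : bool :=
  (map h (qhead Q) == qhead R) && all (fun a => rename h a \in qbody R) (qbody Q).

Definition nonhead_vars (Q : cq Sym) : seq nat := [seq y <- body_vars Q | y \notin qhead Q].
Definition bag_atoms P (Q : cq Sym) : seq (atom Sym) := [seq a <- qbody Q | asym a \notin P].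
Definition set_atoms P (Q : cq Sym) : seq (atom Sym) := [seq a <- qbody Q | asym a \in P].

Lemma mem_body_vars Q y : (y \in body_vars Q) = has (fun a => y \in aargs a) (qbody Q).
Proof.
rewrite mem_undup; apply/flattenP/hasP => [[_ /mapP[a aQ ->]]|[a aQ ya]].
  by exists a.
by exists (aargs a); rewrite ?map_f.
Qed.

Lemma all_body_vars Q (p : pred nat) :
  all p (body_vars Q) = all (fun a => all p (aargs a)) (qbody Q).
Proof.
apply/allP/allP => [pQ a aQ|pQ y].
  by apply/allP => y ya; apply: pQ; rewrite mem_body_vars; apply/hasP; exists a.
by rewrite mem_body_vars => /hasP[a /pQ /allP]; apply.
Qed.

Lemma mem_adom D Q x :
  (x \in adom D Q) = has (fun a => x \in flatten (D (asym a))) (qbody Q).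
Proof.
rewrite mem_undup; apply/flattenP/hasP => [[u /flattenP[_ /mapP[a aQ ->] uD] xu]|].
  by exists a => //; apply/flattenP; exists u.
case=> a aQ /flattenP[u uD xu]; exists u => //.
by apply/flattenP; exists (D (asym a)); rewrite ?map_f.
Qed.

Lemma weight_eq0 D Q g :
  ~~ all (fun y => g y \in adom D Q) (body_vars Q) -> weight D Q g = 0.
Proof.
move=> /allPn[y]; rewrite mem_body_vars => /hasP[a aQ ya] g_y.
rewrite /weight (big_rem a aQ) /=; apply/eqP; rewrite muln_eq0; apply/orP; left.
apply/eqP/count_memPn; apply: contra g_y => gaD.
rewrite mem_adom; apply/hasP; exists a => //.
by apply/flattenP; exists (map g (aargs a)); rewrite ?map_f.
Qed.

Lemma bag_multE Q D t :
  bag_mult Q D t = sum_asgn (adom D Q) (body_vars Q)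
                     (fun g => (map g (qhead Q) == t) * weight D Q g).
Proof. exact: sum_allseqs_asgn. Qed.

Lemma mem_dedup_on P b a : (a \in dedup_on P b) = (a \in b).
Proof.
elim: b => [|a' b IHb] //=; case: ifP => [/andP[_ a'b]|_]; rewrite ?inE IHb //.
by case: eqP => // ->.
Qed.

Lemma uniq_set_atoms_dedup P Q : uniq (set_atoms P (dedup_cq P Q)).
Proof.
rewrite /set_atoms /=; elim: (qbody Q) => [|a b IHb] //=; case: ifP => [_|keep_a] //=.
case: (boolP (asym a \in P)) => //= aP.
rewrite IHb andbT mem_filter aP mem_dedup_on; apply/negP => ab.
by rewrite aP ab in keep_a.
Qed.

Lemma big_dedup_on P b (c : atom Sym -> nat) :
  (forall a, asym a \in P -> c a <= 1) ->
  \prod_(a <- dedup_on P b) c a = \prod_(a <- b) c a.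
Proof.
move=> c_le1; elim: b => [|a b IHb] //=; rewrite big_cons -IHb.
case: ifP => [/andP[aP ab]|_]; last by rewrite big_cons.
rewrite IHb (big_rem a ab) mulnA.
by have := c_le1 a aP; case: (c a) => [|[]].
Qed.

Lemma bag_mult_dedup P Q D t : set_valued_on P D ->
  bag_mult (dedup_cq P Q) D t = bag_mult Q D t.
Proof.
move=> setD; rewrite !bag_multE.
have same_atoms : dedup_on P (qbody Q) =i qbody Q by move=> a; rewrite mem_dedup_on.
rewrite (@eq_dom_sum_asgn _ (adom D Q)) ?undup_uniq // => [|x]; last first.
  by rewrite !mem_adom; apply: eq_has_r.
rewrite (@perm_sum_asgn _ _ (body_vars Q)) ?undup_uniq //; last first.
  apply: uniq_perm; rewrite ?undup_uniq // => y.
  by rewrite !mem_body_vars; apply: eq_has_r.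
congr sum_asgn; apply: functional_extensionality => g; congr (_ * _).
by rewrite /weight big_dedup_on // => a /setD uD; rewrite count_uniq_mem // leq_b1.
Qed.

Lemma bag_mult_iso Q R D t : cq_iso Q R -> bag_mult Q D t = bag_mult R D t.
Proof.
case=> f [[f' fK f'K] head_f body_f]; rewrite !bag_multE.
have inj_f : injective f by apply: can_inj fK.
have mem_map_f (s : seq nat) y : (y \in map f s) = (f' y \in s).
  by rewrite -{1}(f'K y) mem_map.
rewrite [RHS](@perm_sum_asgn _ _ (map f (body_vars Q))) ?undup_uniq //; last first.
  apply: uniq_perm; rewrite ?map_inj_uniq ?undup_uniq // => y.
  rewrite mem_map_f !mem_body_vars -(eq_has_r (perm_mem body_f)) has_map.
  by apply: eq_has => a; rewrite /= mem_map_f.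
rewrite (sum_asgn_map _ _ _ fK f'K).
rewrite (@eq_dom_sum_asgn (adom D R) (adom D Q)) ?undup_uniq //; last first.
  by move=> x; rewrite !mem_adom -(eq_has_r (perm_mem body_f)) has_map.
congr sum_asgn; apply: functional_extensionality => g /=; congr (_ * _).
  by rewrite -head_f -map_comp; congr (_ == _); apply: eq_map => y /=; rewrite fK.
rewrite /weight -(perm_big _ body_f) big_map; apply: eq_bigr => a _ /=.
by rewrite -map_comp (@eq_map _ _ _ g) // => y /=; rewrite fK.
Qed.

Lemma cq_hom_vars Q R h : cq_hom Q R h -> {in body_vars Q, forall y, h y \in body_vars R}.
Proof.
move=> /andP[_ /allP homQR] y; rewrite !mem_body_vars => /hasP[a aQ ya].
by apply/hasP; exists (rename h a); rewrite ?homQR ?map_f.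
Qed.

Lemma eq_in_rename Q f h : {in body_vars Q, f =1 h} -> {in qbody Q, rename f =1 rename h}.
Proof.
move=> f_h a aQ; congr pair; apply/eq_in_map => y ya; apply: f_h.
by rewrite mem_body_vars; apply/hasP; exists a.
Qed.

End Queries.

Lemma wf_dedup_cq (Sym : eqType) (ar : Sym -> nat) (P : seq Sym) (Q : cq Sym) :
  wf_cq ar Q -> wf_cq ar (dedup_cq P Q).
Proof.
have same_atoms : dedup_on P (qbody Q) =i qbody Q by move=> a; rewrite mem_dedup_on.
case=> nonempty_Q arity_Q head_Q; split.
- apply: contraNneq nonempty_Q => /=; move: (same_atoms).
  by case: (qbody Q) => // a b /(_ a) + eq0; rewrite eq0 mem_head.
- by rewrite (eq_all_r same_atoms).
apply: sub_all head_Q => y; rewrite !mem_body_vars.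
by rewrite (eq_has_r same_atoms).
Qed.

Lemma wf_cq_head_sub (Sym : eqType) (ar : Sym -> nat) (Q : cq Sym) :
  wf_cq ar Q -> {subset qhead Q <= body_vars Q}.
Proof. by case=> _ _ /allP. Qed.

Definition bag_equiv (Sym : eqType) (ar : Sym -> nat) (P : seq Sym) (Q R : cq Sym) : Prop :=
  forall D, wf_instance ar D -> set_valued_on P D ->
    forall t, bag_mult Q D t = bag_mult R D t.

Lemma bag_equiv_sym (Sym : eqType) (ar : Sym -> nat) (P : seq Sym) (Q R : cq Sym) :
  bag_equiv ar P Q R -> bag_equiv ar P R Q.
Proof. by move=> equivQR D wfD setD t; rewrite equivQR. Qed.

Lemma bag_equiv_dedup (Sym : eqType) (ar : Sym -> nat) (P : seq Sym) (Q R : cq Sym) :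
  bag_equiv ar P Q R -> bag_equiv ar P (dedup_cq P Q) (dedup_cq P R).
Proof. by move=> equivQR D wfD setD t; rewrite !bag_mult_dedup ?equivQR. Qed.

(** * The canonical instance *)

Lemma sum_iota_copies N c (b : bool) : 0 < c <= N ->
  \sum_(j <- iota 0 N) ((j < c) && (b ==> (j == 0)) : nat) = if b then 1 else c.
Proof.
case/andP=> c_gt0 le_cN; case: b => /=.
  case: N le_cN => [|N] le_cN; first by have := leq_trans c_gt0 le_cN.
  rewrite big_cons c_gt0 big1_seq // => j; rewrite mem_iota => /andP[_ /andP[j_gt0 _]].
  by rewrite eqn0Ngt j_gt0 andbF.
under eq_bigr do rewrite andbT.
rewrite -(subnKC le_cN) iotaD big_cat /= [X in _ + X]big1_seq ?addn0 => [|j]; last first.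
  by rewrite mem_iota add0n => /and3P[_ /leq_gtF ->].
rewrite -[RHS](size_iota 0 c) -sum1_size big_seq [RHS]big_seq.
by apply: eq_bigr => j; rewrite mem_iota => /andP[_ ->].
Qed.

(* The canonical instance of [R] for a parameter vector [vs], which lists the
   number of copies of each variable of [R] followed by the multiplicity of
   each distinct bag atom of [R] (missing entries count as [1]).  Copy [i] of
   the variable [x] is the constant [x + base * i]; a relation [p] contains
   every copy of every atom of [R] over [p], with multiplicity [amult], and
   [canon_tuple] is the head of [R] on the copies [0]. *)
Section CanonicalInstance.

Variables (Sym : eqType) (ar : Sym -> nat) (P : seq Sym) (R : cq Sym) (vs : seq nat).

Definition ubatoms : seq (atom Sym) := undup (bag_atoms P R).

Definition copies (x : nat) : nat := nth 1 vs (index x (body_vars R)).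

Definition amult (b : atom Sym) : nat :=
  if asym b \in P then 1 else nth 1 vs (size (body_vars R) + index b ubatoms).

Definition base : nat := (\max_(x <- body_vars R) x).+1.
Definition ncopies : nat := (sumn vs).+1.
Definition enc (x i : nat) : nat := x + base * i.

Definition tmult (p : Sym) (u : seq nat) : nat :=
  let b := (p, map (modn^~ base) u) in
  if (b \in qbody R) && all (fun c => c %/ base < copies (c %% base)) u
  then amult b else 0.

Definition canon_db : instance Sym := fun p =>
  flatten [seq nseq (tmult p u) u | u <- allseqs (ar p) (iota 0 (base * ncopies))].

Definition canon_tuple : seq nat := map (enc^~ 0) (qhead R).

Lemma lt_base x : x \in body_vars R -> x < base.
Proof. by move=> xR; rewrite ltnS (@leq_bigmax_seq _ _ predT id). Qed.

Lemma copies_le x : copies x <= ncopies.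
Proof.
rewrite /copies /ncopies; elim: vs (index _ _) => [|v vs' IHvs] [|i] //=.
  by rewrite leqW ?leq_addr.
by apply: leq_trans (IHvs i) _; rewrite ltnS leq_addl.
Qed.

Lemma copies_gt0 x : all (fun v => 0 < v) vs -> 0 < copies x.
Proof.
move=> /allP vs_pos; rewrite /copies.
by case: (ltnP (index x (body_vars R)) (size vs)) => [/(mem_nth 1)/vs_pos|/(nth_default 1) ->].
Qed.

Lemma enc_modn x i : x < base -> enc x i %% base = x.
Proof. by move=> ltxb; rewrite /enc addnC mulnC modnMDl modn_small. Qed.

Lemma enc_divn x i : x < base -> enc x i %/ base = i.
Proof.
move=> ltxb; rewrite /enc addnC mulnC divnMDl ?(leq_ltn_trans _ ltxb) //.
by rewrite divn_small // addn0.
Qed.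

Lemma enc_lt x i : x < base -> i < ncopies -> enc x i < base * ncopies.
Proof.
move=> ltxb ltin; apply: (@leq_trans (base * i.+1)); first by rewrite /enc mulnS ltn_add2r.
by rewrite leq_mul2l ltin orbT.
Qed.

Lemma eq_enc x i x' i' : x < base -> x' < base ->
  (enc x i == enc x' i') = (x == x') && (i == i').
Proof.
move=> ltxb ltx'b; apply/eqP/andP => [eq_enc|[/eqP -> /eqP ->] //].
split; apply/eqP; first by rewrite -(enc_modn i ltxb) eq_enc enc_modn.
by rewrite -(enc_divn i ltxb) eq_enc enc_divn.
Qed.

Lemma count_canon_db p u :
  count_mem u (canon_db p) = (u \in allseqs (ar p) (iota 0 (base * ncopies))) * tmult p u.
Proof. by rewrite count_flatten_nseq // uniq_allseqs // iota_uniq. Qed.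

Lemma canon_db_sub p : {subset canon_db p <= allseqs (ar p) (iota 0 (base * ncopies))}.
Proof. by move=> u /flattenP[_ /mapP[w wA ->] /nseqP[-> _]]. Qed.

Lemma canon_db_wf : wf_instance ar canon_db.
Proof. by move=> p; apply/allP => u /canon_db_sub; rewrite mem_allseqs => /andP[]. Qed.

Lemma canon_db_set_valued : set_valued_on P canon_db.
Proof.
move=> p pP; apply: uniq_count_le1 => u; rewrite count_canon_db.
apply: (@leq_trans (tmult p u)); first by case: (_ \in _); rewrite ?mul1n.
by rewrite /tmult /amult /= pP; case: ifP.
Qed.

Lemma eq_map_enc (hd l : seq nat) (h i : nat -> nat) :
  {in hd, forall y, h y < base} -> all (fun x => x < base) l ->
  (map (fun y => enc (h y) (i y)) hd == map (enc^~ 0) l) =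
  (map h hd == l) && all (fun y => i y == 0) hd.
Proof.
elim: hd l => [|y hd IHhd] [|x l] //= h_lt /andP[ltxb l_lt].
rewrite !eqseq_cons eq_enc ?h_lt ?mem_head // IHhd // => [|z zhd]; last first.
  by apply: h_lt; rewrite inE zhd orbT.
by case: (h y == x); case: (i y == 0); case: (map h hd == l); case: all.
Qed.

Lemma count_canon_db_enc (a : atom Sym) (h i : nat -> nat) :
  size (aargs a) = ar (asym a) ->
  {in aargs a, forall y, h y < base /\ i y < ncopies} ->
  count_mem (map (fun y => enc (h y) (i y)) (aargs a)) (canon_db (asym a)) =
  ((rename h a \in qbody R) && all (fun y => i y < copies (h y)) (aargs a)) *
    amult (rename h a).
Proof.
move=> size_a hi_lt; rewrite count_canon_db mem_allseqs size_map size_a eqxx /=.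
have -> : all (mem (iota 0 (base * ncopies))) (map (fun y => enc (h y) (i y)) (aargs a)).
  apply/allP => _ /mapP[y ya ->]; have [hyb iyn] := hi_lt y ya.
  by rewrite inE mem_iota enc_lt.
rewrite mul1n /tmult /=.
have -> : map (modn^~ base) (map (fun y => enc (h y) (i y)) (aargs a)) = map h (aargs a).
  by rewrite -map_comp; apply/eq_in_map => y ya; rewrite /= enc_modn //; case: (hi_lt y ya).
rewrite all_map (eq_in_all (a2 := fun y => i y < copies (h y))) => [|y ya]; last first.
  by case: (hi_lt y ya) => hyb _; rewrite /= enc_modn // enc_divn.
by case: ifP; rewrite ?mul1n ?mul0n.
Qed.

Hypothesis head_R : {subset qhead R <= body_vars R}.

Lemma summand_canon_db (Q : cq Sym) (h i : nat -> nat) : wf_cq ar Q ->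
  {in body_vars Q, forall y, h y < base /\ i y < ncopies} ->
  let g y := enc (h y) (i y) in
  (map g (qhead Q) == canon_tuple) * weight canon_db Q g =
  cq_hom Q R h * ((\prod_(a <- qbody Q) amult (rename h a)) *
    \prod_(y <- body_vars Q) ((i y < copies (h y)) && ((y \in qhead Q) ==> (i y == 0)) : nat)).
Proof.
case=> _ /allP arity_Q /allP head_Q hi_lt g.
have weightE : weight canon_db Q g =
    (all (fun a => rename h a \in qbody R) (qbody Q) &&
     all (fun y => i y < copies (h y)) (body_vars Q)) * \prod_(a <- qbody Q) amult (rename h a).
  rewrite /weight (eq_big_seq (fun a => ((rename h a \in qbody R) &&
      all (fun y => i y < copies (h y)) (aargs a) : nat) * amult (rename h a))) => [|a aQ].
    by rewrite big_split /= prodn_bool all_predI all_body_vars.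
  apply: count_canon_db_enc => [|y ya]; first exact/eqP/arity_Q.
  by apply: hi_lt; rewrite mem_body_vars; apply/hasP; exists a.
have heads0 : all (fun y => (y \in qhead Q) ==> (i y == 0)) (body_vars Q) =
              all (fun y => i y == 0) (qhead Q).
  apply/allP/allP => [H y yQ|H y _]; first by have := H y (head_Q y yQ); rewrite yQ.
  by apply/implyP => /H.
rewrite /canon_tuple eq_map_enc => [|y /head_Q /hi_lt[]//|]; last first.
  by apply/allP => x /head_R /lt_base.
rewrite weightE prodn_bool all_predI heads0 /cq_hom.
by case: (map h _ == _); case: (all (fun y => i y == 0) _); case: (all (fun a => _ \in _) _);
   case: (all (fun y => i y < _) _); rewrite /= ?mul0n ?muln0 ?mul1n ?muln1.
Qed.

Lemma bag_mult_canon_db (Q : cq Sym) : wf_cq ar Q -> all (fun v => 0 < v) vs ->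
  bag_mult Q canon_db canon_tuple =
  sum_asgn (iota 0 base) (body_vars Q) (fun h => cq_hom Q R h *
    ((\prod_(a <- qbody Q) amult (rename h a)) * \prod_(y <- nonhead_vars Q) copies (h y))).
Proof.
move=> wfQ vs_pos; rewrite bag_multE.
rewrite -(@sum_asgn_sub_dom _ (iota 0 (base * ncopies))) ?undup_uniq ?iota_uniq //;
  last 2 first.
- move=> x; rewrite mem_adom => /hasP[a _ /flattenP[u /canon_db_sub]].
  by rewrite mem_allseqs => /andP[_ /allP]; apply.
- by move=> g /weight_eq0 ->; rewrite muln0.
rewrite sum_asgn_iota_muln; apply: eq_in_sum_asgn => h /allP h_lt.
rewrite (@eq_in_sum_asgn _ _ _ (fun i => cq_hom Q R h *
    ((\prod_(a <- qbody Q) amult (rename h a)) *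
     \prod_(y <- body_vars Q) ((i y < copies (h y)) && ((y \in qhead Q) ==> (i y == 0)) : nat))));
  last first.
  move=> i /allP i_lt; apply: summand_canon_db => // y yQ.
  by have := h_lt y yQ; have := i_lt y yQ; rewrite !mem_iota.
rewrite !sum_asgn_distrr (sum_asgn_prod _ (fun y j =>
  ((j < copies (h y)) && ((y \in qhead Q) ==> (j == 0)) : nat))) ?undup_uniq //.
rewrite /nonhead_vars big_filter; congr (_ * (_ * _)).
rewrite [RHS]big_mkcond; apply: eq_bigr => y _; rewrite sum_iota_copies ?copies_gt0 ?copies_le //.
by case: (y \in qhead Q).
Qed.

End CanonicalInstance.

(** * Tight homomorphisms *)

Section TightHom.

Variables (Sym : eqType) (ar : Sym -> nat) (P : seq Sym) (R : cq Sym).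
Implicit Types (Q : cq Sym) (h : nat -> nat) (vs : seq nat).

(* [h] hits every non-head variable of [R] exactly once and every bag atom
   of [R] with its multiplicity: these are the homomorphisms with the
   monomial of the identity of [R]. *)
Definition tight_hom Q h : Prop := [/\ cq_hom Q R h,
  perm_eq (map h (nonhead_vars Q)) (nonhead_vars R) &
  perm_eq (map (rename h) (bag_atoms P Q)) (bag_atoms P R)].

Definition hom_exponent Q h : seq nat :=
  [seq count_mem x (map h (nonhead_vars Q)) | x <- body_vars R] ++
  [seq count_mem b (map (rename h) (bag_atoms P Q)) | b <- ubatoms P R].

Definition hom_exponents Q : seq (seq nat) :=
  [seq hom_exponent Q (asgn_of (body_vars Q) s) |
     s <- allseqs (size (body_vars Q)) (iota 0 (base R))
   & cq_hom Q R (asgn_of (body_vars Q) s)].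

Definition nparams : nat := size (body_vars R) + size (ubatoms P R).

Let idR : nat -> nat := asgn_of (body_vars R) (body_vars R).

Lemma hom_bag_atoms Q h : cq_hom Q R h ->
  {subset map (rename h) (bag_atoms P Q) <= bag_atoms P R}.
Proof.
move=> /andP[_ /allP homQR] b /mapP[a]; rewrite mem_filter => /andP[aP aQ] ->.
by rewrite /bag_atoms mem_filter /= aP homQR.
Qed.

Lemma hom_nonhead_vars Q h : cq_hom Q R h ->
  {subset map h (nonhead_vars Q) <= body_vars R}.
Proof.
by move=> homQR x /mapP[y]; rewrite mem_filter => /andP[_ /(cq_hom_vars homQR) ?] ->.
Qed.

Lemma params_split vs : size vs = nparams ->
  vs = map (copies R vs) (body_vars R) ++ map (amult P R vs) (ubatoms P R).
Proof.
move=> size_vs; rewrite -[vs in LHS](cat_take_drop (size (body_vars R))); congr (_ ++ _).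
  have -> : map (copies R vs) (body_vars R) =
            map (nth 1 vs) (map (index^~ (body_vars R)) (body_vars R)) by rewrite -map_comp.
  by rewrite map_index_iota ?undup_uniq // map_nth_iota0 // size_vs leq_addr.
have -> : map (amult P R vs) (ubatoms P R) =
    map (nth 1 vs) (map (addn (size (body_vars R))) (map (index^~ (ubatoms P R)) (ubatoms P R))).
  rewrite -!map_comp; apply/eq_in_map => b.
  by rewrite mem_undup mem_filter => /andP[/negbTE bP _]; rewrite /amult bP.
rewrite map_index_iota ?undup_uniq // -iotaDl addn0 map_nth_iota ?size_vs ?addKn //.
by rewrite take_oversize // size_drop size_vs addKn.
Qed.

Lemma monomial_hom_exponent Q h vs : cq_hom Q R h -> size vs = nparams ->
  monomial vs (hom_exponent Q h) =
  (\prod_(a <- qbody Q) amult P R vs (rename h a)) *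
  \prod_(y <- nonhead_vars Q) copies R vs (h y).
Proof.
move=> homQR size_vs.
rewrite {1}(params_split size_vs) monomial_cat ?size_map // !monomial_map mulnC.
congr (_ * _); last by rewrite (prod_count_mem _ (undup_uniq _) (hom_nonhead_vars homQR)).
have -> : \prod_(a <- qbody Q) amult P R vs (rename h a) =
          \prod_(a <- bag_atoms P Q) amult P R vs (rename h a).
  rewrite big_filter [RHS]big_mkcond; apply: eq_bigr => a _.
  by rewrite /amult /=; case: (asym a \in P).
rewrite (prod_count_mem _ (undup_uniq (bag_atoms P R))) // => b /(hom_bag_atoms homQR).
by rewrite mem_undup.
Qed.

Lemma bag_mult_monomials Q vs : wf_cq ar Q -> wf_cq ar R ->
  all (fun v => 0 < v) vs -> size vs = nparams ->
  bag_mult Q (canon_db ar P R vs) (canon_tuple R) = \sum_(e <- hom_exponents Q) monomial vs e.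
Proof.
move=> wfQ [_ _ /allP head_R] vs_pos size_vs.
rewrite bag_mult_canon_db // -sum_allseqs_asgn /hom_exponents big_map big_filter.
rewrite [RHS]big_mkcond; apply: eq_bigr => s _.
by case: ifP => homQR; rewrite ?mul1n ?mul0n ?monomial_hom_exponent.
Qed.

Lemma rename_idR a : a \in qbody R -> rename idR a = a.
Proof.
by case: a => p u aR; rewrite (eq_in_rename (h := id) _ aR) /rename ?map_id // => y /asgn_of_id.
Qed.

Lemma cq_hom_idR : wf_cq ar R -> cq_hom R R idR.
Proof.
case=> _ _ /allP head_R; apply/andP; split.
  by apply/eqP; rewrite -[RHS]map_id; apply/eq_in_map => y /head_R /asgn_of_id.
by apply/allP => a aR; rewrite rename_idR.
Qed.

Lemma tight_hom_of_exponent Q h : cq_hom Q R h ->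
  hom_exponent Q h = hom_exponent R idR -> tight_hom Q h.
Proof.
move=> homQR /eqP; rewrite eqseq_cat ?size_map //.
move=> /andP[/eqP/eq_in_map eq_vars /eqP/eq_in_map eq_atoms].
have nonhead_R : {subset nonhead_vars R <= body_vars R} by move=> y; rewrite mem_filter => /andP[].
have bag_R : {subset bag_atoms P R <= ubatoms P R} by move=> b; rewrite mem_undup.
split=> //.
  apply: (perm_eq_count_on (hom_nonhead_vars homQR) nonhead_R) => x /eq_vars /= ->.
  by congr count; rewrite -[RHS]map_id; apply/eq_in_map => y /nonhead_R /asgn_of_id.
have bag_hQ b : b \in map (rename h) (bag_atoms P Q) -> b \in ubatoms P R.
  by move/(hom_bag_atoms homQR)/bag_R.
apply: (perm_eq_count_on bag_hQ bag_R) => b /eq_atoms /= ->.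
congr count; rewrite -[RHS]map_id; apply/eq_in_map => a.
by rewrite mem_filter => /andP[_ /rename_idR].
Qed.

Lemma equiv_tight_hom Q : wf_cq ar Q -> wf_cq ar R -> bag_equiv ar P Q R ->
  exists h, tight_hom Q h.
Proof.
move=> wfQ wfR equivQR.
have size_exponents Q' : all (fun e => size e == nparams) (hom_exponents Q').
  by apply/allP => _ /mapP[s _ ->]; rewrite size_cat !size_map.
have eq_sums : eq_monomial_sums nparams (hom_exponents Q) (hom_exponents R).
  move=> vs size_vs vs_pos; rewrite -!bag_mult_monomials //.
  by apply: equivQR; [apply: canon_db_wf | apply: canon_db_set_valued].
have /(_ (hom_exponent R idR)) eq_count :=
  count_eq_of_monomial_sums (size_exponents Q) (size_exponents R) eq_sums.
have : hom_exponent R idR \in hom_exponents Q.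
  rewrite -has_pred1 has_count eq_count -has_count has_pred1.
  apply/mapP; exists (body_vars R) => //; rewrite mem_filter cq_hom_idR // mem_allseqs eqxx.
  by apply/allP => x xR; rewrite inE mem_iota lt_base.
case/mapP => s; rewrite mem_filter => /andP[homQR _] eq_exponent.
by exists (asgn_of (body_vars Q) s); apply: tight_hom_of_exponent.
Qed.

End TightHom.

Section TightHomIso.

Variables (Sym : eqType) (P : seq Sym).
Implicit Types (Q R : cq Sym) (h : nat -> nat).

Lemma rename_inj f : bijective f -> injective (@rename Sym f).
Proof. by move=> bij_f [p u] [p' u'] [-> /(inj_map (bij_inj bij_f)) ->]. Qed.

Lemma perm_set_bag_atoms Q : perm_eq (qbody Q) (set_atoms P Q ++ bag_atoms P Q).
Proof. by rewrite perm_sym perm_filterC. Qed.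

Lemma size_undup_head_hom Q R h : cq_hom Q R h ->
  size (undup (qhead R)) <= size (undup (qhead Q)).
Proof. by case/andP=> /eqP <- _; apply: size_undup_map. Qed.

(* With the reverse inequality on heads, [h] is injective on the head
   variables; being a bijection between non-head variables as well, it is
   injective on all of [body_vars Q]. *)
Lemma tight_hom_bij Q R h : {subset qhead Q <= body_vars Q} -> tight_hom P R Q h ->
  size (undup (qhead Q)) <= size (undup (qhead R)) ->
  exists2 f, bijective f & {in body_vars Q, f =1 h}.
Proof.
move=> head_Q [homQR perm_nonhead _] le_head.
have head_h : map h (qhead Q) = qhead R by case/andP: homQR => /eqP.
have uniq_nonhead Q' : uniq (nonhead_vars Q') by rewrite filter_uniq ?undup_uniq.
have uniq_heads : uniq (map h (undup (qhead Q))).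
  have eq_heads : undup (qhead R) =i map h (undup (qhead Q)).
    by move=> x; rewrite mem_undup -head_h mem_map_undup.
  rewrite (uniq_size_uniq (undup_uniq _) eq_heads) size_map.
  by rewrite eqn_leq le_head (size_undup_head_hom homQR).
pose W := undup (qhead Q) ++ nonhead_vars Q.
have uniq_W : uniq W.
  rewrite cat_uniq undup_uniq uniq_nonhead andbT /=; apply/hasPn => y.
  by rewrite mem_undup mem_filter => /andP[].
have uniq_hW : uniq (map h W).
  rewrite map_cat cat_uniq uniq_heads (perm_uniq perm_nonhead) uniq_nonhead andbT /=.
  apply/hasPn => x; rewrite (perm_mem perm_nonhead) mem_filter => /andP[x_head _].
  by rewrite mem_map_undup head_h.
have [f bij_f f_W] := exists_bij_map uniq_W uniq_hW (esym (size_map _ _)).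
exists f => // y yQ; apply: (eq_in_map _ _ _).2 f_W _ _.
by rewrite mem_cat mem_undup mem_filter yQ andbT orbN.
Qed.

Lemma map_rename_set_atoms Q R h f : cq_hom Q R h -> {in body_vars Q, f =1 h} ->
  {subset map (rename f) (set_atoms P Q) <= set_atoms P R}.
Proof.
move=> /andP[_ /allP homQR] f_h b /mapP[a]; rewrite mem_filter => /andP[aP aQ] ->.
by rewrite (eq_in_rename f_h aQ) /set_atoms mem_filter /= aP homQR.
Qed.

Lemma tight_homs_iso Q R h1 h2 :
  {subset qhead Q <= body_vars Q} -> {subset qhead R <= body_vars R} ->
  tight_hom P R Q h1 -> tight_hom P Q R h2 ->
  uniq (set_atoms P Q) -> uniq (set_atoms P R) -> cq_iso Q R.
Proof.
move=> head_Q head_R tight1 tight2 uniq_Q uniq_R.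
have [homQR _ perm_bag1] := tight1; have [homRQ _ _] := tight2.
have [f1 bij_f1 f1_h1] := tight_hom_bij head_Q tight1 (size_undup_head_hom homRQ).
have [f2 bij_f2 f2_h2] := tight_hom_bij head_R tight2 (size_undup_head_hom homQR).
have set_f1 := map_rename_set_atoms homQR f1_h1.
have le_set : size (set_atoms P R) <= size (map (rename f1) (set_atoms P Q)).
  rewrite size_map -(size_map (rename f2)); apply: uniq_leq_size.
    by rewrite map_inj_uniq //; apply: rename_inj.
  exact: map_rename_set_atoms homRQ f2_h2.
exists f1; split=> //.
  by case/andP: homQR => /eqP <- _; apply/eq_in_map => y /head_Q /f1_h1.
rewrite (perm_trans (perm_map _ (perm_set_bag_atoms Q))) // map_cat perm_sym.
rewrite (perm_trans (perm_set_bag_atoms R)) // perm_sym; apply: perm_cat.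
  have uniq_f1 : uniq (map (rename f1) (set_atoms P Q)).
    by rewrite map_inj_uniq //; apply: rename_inj.
  by apply: uniq_perm => //; have [] := uniq_min_size uniq_f1 set_f1 le_set.
rewrite (_ : map (rename f1) _ = map (rename h1) (bag_atoms P Q)) //.
by apply/eq_in_map => a; rewrite mem_filter => /andP[_ /(eq_in_rename f1_h1)].
Qed.

End TightHomIso.

Unset Implicit Arguments.

Theorem theorem4p2 (Sym : eqType) (ar : Sym -> nat) (P : seq Sym)
    (Q1 Q2 : cq Sym) :
  wf_cq ar Q1 -> wf_cq ar Q2 ->
  (forall D : instance Sym, wf_instance ar D -> set_valued_on P D ->
     forall t : seq nat, bag_mult Q1 D t = bag_mult Q2 D t)
  <-> cq_iso (dedup_cq P Q1) (dedup_cq P Q2).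
Proof.
move=> /(wf_dedup_cq P) wf1 /(wf_dedup_cq P) wf2.
split=> [/bag_equiv_dedup equiv12|iso12 D wfD setD t]; last first.
  by rewrite -(bag_mult_dedup Q1 t setD) -(bag_mult_dedup Q2 t setD) (bag_mult_iso _ _ iso12).
have [h1 tight1] := equiv_tight_hom wf1 wf2 equiv12.
have [h2 tight2] := equiv_tight_hom wf2 wf1 (bag_equiv_sym equiv12).
apply: (tight_homs_iso (wf_cq_head_sub wf1) (wf_cq_head_sub wf2) tight1 tight2);
  exact: uniq_set_atoms_dedup.
Qed.
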